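(* Let $b\ge a>0$ and $m\in\mathbb{R}$, and let $f$ be a function on $(0,\infty)$ which is nonnegative and increasing on $(0,b)$ and satisfies $f(x)\ge m$ for $x\ge b$. Then for every $\xi>0$, \[f(a)\le\frac{e^{a\xi}\,\xi\,\mathcal{L}f(\xi)-m\,e^{-(b-a)\xi}}{1-e^{-(b-a)\xi}}.\]
   Context: $\mathcal{L}f(\xi)=\int_0^\infty e^{-\xi x}f(x)\,dx$ denotes the Laplace transform (assumed finite). *)

From HB Require Import structures.
From mathcomp Require Import all_boot all_order all_algebra.
From mathcomp Require Import all_classical all_reals all_analysis.
Set Implicit Arguments. Unset Strict Implicit. Unset Printing Implicit Defensive.
Import Order.TTheory GRing.Theory Num.Theory.
Local Open Scope classical_set_scope.
Local Open Scope ring_scope.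

Definition laplace_integrand {R : realType} (f : R -> R) (xi : R) : R -> R :=
  fun x => expR (- (xi * x)) * f x.

Definition laplace {R : realType} (f : R -> R) (xi : R) : R :=
  Rintegral (@lebesgue_measure R) `]0%R, +oo[ (laplace_integrand f xi).

Definition laplace_finite {R : realType} (f : R -> R) (xi : R) : Prop :=
  (@lebesgue_measure R).-integrable `]0%R, +oo[
    (fun x => (laplace_integrand f xi x)%:E).

(* Split the Laplace integral at a and b.  On (0, a) the integrand is
   nonnegative, on (a, b) monotonicity gives f >= f a, and on (b, +oo) f >= m;
   integrating e^(-xi x) explicitly over the last two pieces yields
   xi L f(xi) >= f a (e^(-a xi) - e^(-b xi)) + m e^(-b xi), which rearranges
   to the claim after multiplication by e^(a xi). *)

From HB Require Import structures.
From mathcomp Require Import all_boot all_order all_algebra.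
From mathcomp Require Import all_classical all_reals all_analysis.
From mathcomp Require Import measurable_realfun.
From mathcomp.algebra_tactics Require Import ring lra.
Import Order.TTheory GRing.Theory Num.Theory.
Import numFieldNormedType.Exports.
Local Open Scope classical_set_scope.
Local Open Scope ring_scope.

Section Rintegral_itv.
Context {R : realType}.
Implicit Types (g h : R -> R) (D : set R).

Lemma Rintegral_itvoy_split {g} {c d : R} : c <= d ->
  lebesgue_measure.-integrable `]c, +oo[ (EFin \o g) ->
  \int[lebesgue_measure]_(x in `]c, +oo[) g x =
  \int[lebesgue_measure]_(x in `]c, d[) g x + \int[lebesgue_measure]_(x in `]d, +oo[) g x.
Proof.
move=> cd ig.
have := @Rintegral_itvB _ _ (BRight c) (BInfty _ false) d ig.
rewrite /= !bnd_simp cd => /(_ erefl erefl).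
rewrite -Rintegral_itv_bndo_bndc => [<-|]; first by ring.
by apply: integrableS ig => //; apply: subset_itvl.
Qed.

Lemma ler_Rintegral_scale D h g (k : R) : measurable D ->
  lebesgue_measure.-integrable D (EFin \o h) ->
  lebesgue_measure.-integrable D (EFin \o g) ->
  (forall x, D x -> k * h x <= g x) ->
  k * \int[lebesgue_measure]_(x in D) h x <= \int[lebesgue_measure]_(x in D) g x.
Proof.
move=> mD ih ig hg; rewrite -RintegralZl//; apply: le_Rintegral => //.
have -> : EFin \o (fun x => k * h x) = (fun x => k%:E * (EFin \o h) x)%E.
  by apply/funext => x; rewrite /= EFinM.
exact: integrableZl.
Qed.

End Rintegral_itv.

Section exp_decay.
Context {R : realType} {xi : R}.
Hypothesis xi_gt0 : 0 < xi.

Lemma continuous_expR_decay : continuous (fun x : R => expR (- (xi * x))).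
Proof.
move=> x; apply: continuous_comp; last exact: continuous_expR.
by apply: (@continuousN _ R^o); apply: continuousM => //; exact: cst_continuous.
Qed.

Lemma is_derive_expR_decay (x : R) :
  is_derive x 1 (fun y => - expR (- (xi * y)) / xi) (expR (- (xi * x))).
Proof.
have hlin : is_derive x 1 (fun y : R => - (xi * y)) (- (xi * 1)).
  by apply: is_deriveN; apply: is_deriveZ; exact: is_derive_id.
have hexp := @is_derive1_comp _ expR (fun y : R => - (xi * y)) x _ _
  (is_derive_expR (- (xi * x))) hlin.
have := @is_deriveZ _ _ _ _ (- xi^-1) x 1 _ hexp.
have -> : - xi^-1 *: (expR (- (xi * x)) * - (xi * 1)) = expR (- (xi * x)).
  by rewrite -[_ *: _]/(_ * _); field; exact: lt0r_neq0.
congr is_derive; apply/funext => y.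
by rewrite /= -[_ *: _]/(_ * _) mulrC mulrN mulNr.
Qed.

Lemma expR_decay_cvgy : expR (- (xi * x)) @[x --> +oo] --> (0 : R).
Proof.
apply: (@cvg_comp _ _ _ (fun z => xi * z) (fun z => expR (- z)) _ (pinfty_nbhs R)).
  exact: gt0_cvgMry.
exact: cvgr_expR.
Qed.

Lemma integral_expR_decay_itvcy (c : R) :
  (\int[lebesgue_measure]_(x in `[c, +oo[) (expR (- (xi * x)))%:E
    = (expR (- (xi * c)) / xi)%:E)%E.
Proof.
rewrite (@ge0_continuous_FTC2y _ _ (fun y => - expR (- (xi * y)) / xi) c 0).
- by rewrite -EFinB sub0r mulNr opprK.
- by move=> x _; exact: expR_ge0.
- exact/continuous_subspaceT/continuous_expR_decay.
- rewrite (_ : 0 = - 0 / xi); last by rewrite oppr0 mul0r.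
  by apply: cvgMr_tmp; apply: cvgN; exact: expR_decay_cvgy.
- by move=> x _; case: (is_derive_expR_decay x).
- apply: cvg_at_right_filter; apply: cvgMr_tmp; apply: cvgN; exact: (continuous_expR_decay c).
- by move=> x _; rewrite derive1E; apply: derive_val; exact: is_derive_expR_decay.
Qed.

Lemma integrable_expR_decay_itvoy (c : R) :
  lebesgue_measure.-integrable `]c, +oo[ (fun x => (expR (- (xi * x)))%:E).
Proof.
have icy : lebesgue_measure.-integrable `[c, +oo[ (fun x => (expR (- (xi * x)))%:E).
  apply/integrableP; split.
    apply/measurable_EFinP; apply: measurable_funS (subsetT _) _ => //.
    exact: continuous_measurable_fun continuous_expR_decay.
  under eq_integral do rewrite /= ger0_norm ?expR_ge0//.
  by rewrite integral_expR_decay_itvcy ltry.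
by apply: integrableS icy => //; apply: subset_itvr; rewrite bnd_simp.
Qed.

Lemma Rintegral_expR_decay_itvoy (c : R) :
  \int[lebesgue_measure]_(x in `]c, +oo[) expR (- (xi * x)) = expR (- (xi * c)) / xi.
Proof.
rewrite Rintegral_itv_obnd_cbnd; last exact: integrable_expR_decay_itvoy.
by rewrite /Rintegral integral_expR_decay_itvcy.
Qed.

Lemma Rintegral_expR_decay_itvoo (c d : R) : c <= d ->
  \int[lebesgue_measure]_(x in `]c, d[) expR (- (xi * x))
    = (expR (- (xi * c)) - expR (- (xi * d))) / xi.
Proof.
move=> cd; have := Rintegral_itvoy_split cd (integrable_expR_decay_itvoy c).
by rewrite !Rintegral_expR_decay_itvoy mulrBl => ->; ring.
Qed.

End exp_decay.

Lemma laplace_lower_bound {R : realType} {a b m xi : R} {f : R -> R} :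
  0 <= a -> a <= b -> 0 < xi -> laplace_finite f xi ->
  (forall x, 0 < x < a -> 0 <= f x) ->
  (forall x, a < x < b -> f a <= f x) ->
  (forall x, b < x -> m <= f x) ->
  f a * (expR (- (xi * a)) - expR (- (xi * b))) + m * expR (- (xi * b))
    <= xi * laplace f xi.
Proof.
move=> a_ge0 ab xi_gt0 Lfin f_ge0 f_ge_fa f_ge_m.
set G := laplace_integrand f xi.
have iG (D : set R) : measurable D -> D `<=` `]0, +oo[ ->
    lebesgue_measure.-integrable D (EFin \o G).
  by move=> mD DS; exact: integrableS Lfin.
have iGay : lebesgue_measure.-integrable `]a, +oo[ (EFin \o G).
  by apply: iG => //; apply: subset_itvr; rewrite bnd_simp.
rewrite /laplace (Rintegral_itvoy_split a_ge0 Lfin) (Rintegral_itvoy_split ab iGay).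
have low : 0 <= \int[lebesgue_measure]_(x in `]0, a[) G x.
  apply: Rintegral_ge0 => x; rewrite /= in_itv /= => x0a.
  by rewrite mulr_ge0 ?expR_ge0 ?f_ge0.
have mid : f a * ((expR (- (xi * a)) - expR (- (xi * b))) / xi)
    <= \int[lebesgue_measure]_(x in `]a, b[) G x.
  rewrite -Rintegral_expR_decay_itvoo //; apply: ler_Rintegral_scale => //.
  - by apply: integrableS (integrable_expR_decay_itvoy xi_gt0 a) => //; exact: subset_itvl.
  - by apply: iG => //; exact: subset_itv.
  - move=> x; rewrite /= in_itv /= => axb.
    by rewrite /G /laplace_integrand mulrC ler_wpM2l ?expR_ge0 ?f_ge_fa.
have high : m * (expR (- (xi * b)) / xi) <= \int[lebesgue_measure]_(x in `]b, +oo[) G x.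
  rewrite -Rintegral_expR_decay_itvoy //; apply: ler_Rintegral_scale => //.
  - exact: integrable_expR_decay_itvoy.
  - by apply: iG => //; apply: subset_itvr; rewrite bnd_simp (le_trans a_ge0).
  - move=> x; rewrite /= in_itv /= andbT => bx.
    by rewrite /G /laplace_integrand mulrC ler_wpM2l ?expR_ge0 ?f_ge_m.
rewrite -/G; apply: le_trans (ler_wpM2l (ltW xi_gt0) (lerD low (lerD mid high))).
by rewrite add0r [X in _ <= X]mulrC mulrDl -!mulrA mulVf ?lt0r_neq0 ?mulr1.
Qed.

Theorem proposition2p13 (R : realType) (a b m : R) (f : R -> R) :
  0 < a -> a < b ->
  (forall x, 0 < x < b -> 0 <= f x) ->
  (forall x y, 0 < x -> x <= y -> y < b -> f x <= f y) ->
  (forall x, b <= x -> m <= f x) ->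
  forall xi : R, 0 < xi -> laplace_finite f xi ->
  f a <= (expR (a * xi) * xi * laplace f xi - m * expR (- ((b - a) * xi)))
         / (1 - expR (- ((b - a) * xi))).
Proof.
move=> a_gt0 ab f_ge0 f_incr f_ge_m xi xi_gt0 Lfin.
have f_ge0_a x : 0 < x < a -> 0 <= f x.
  by move=> /andP[x0 xa]; rewrite f_ge0 // x0 (lt_trans xa).
have f_ge_fa x : a < x < b -> f a <= f x.
  by move=> /andP[ax xb]; rewrite f_incr // ltW.
have f_gt_b x : b < x -> m <= f x by move=> /ltW; exact: f_ge_m.
have := laplace_lower_bound (ltW a_gt0) (ltW ab) xi_gt0 Lfin f_ge0_a f_ge_fa f_gt_b.
have ea_gt0 : 0 < expR (a * xi) := expR_gt0 _.
move=> /(ler_wpM2l (ltW ea_gt0)).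
have -> : expR (a * xi) * (f a * (expR (- (xi * a)) - expR (- (xi * b)))
    + m * expR (- (xi * b)))
  = f a * (1 - expR (- ((b - a) * xi))) + m * expR (- ((b - a) * xi)).
  have ea_Ea : expR (a * xi) * expR (- (xi * a)) = 1.
    by rewrite -expRD mulrC subrr expR0.
  have ea_Eb : expR (a * xi) * expR (- (xi * b)) = expR (- ((b - a) * xi)).
    by rewrite -expRD; congr expR; ring.
  by rewrite -ea_Ea -ea_Eb; ring.
have q_lt1 : expR (- ((b - a) * xi)) < 1.
  by rewrite -expR0 ltr_expR oppr_lt0 mulr_gt0 // subr_gt0.
rewrite ler_pdivlMr ?subr_gt0 //.
move: (expR (- _)) => q; lra.
Qed.
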